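(* In the security-second routing model, for any destination $d$, attacker $m$, source AS $s$, and deployment (set of secure ASes) $S\subseteq V$, $s$ stabilizes to a route of the same type as any route in $\mathrm{BPR}(s,\emptyset,m,d)$.
   Context: An AS graph is an undirected graph $G=(V,E)$ of ASes; each edge is labeled customer–provider or peer–peer. Routing is to a destination $d$; $d$ announces ''$d$'' to neighbors; each other AS selects at most one route and announces it (prepended with itself) per the export policy (Ex): a route whose next hop is a customer is announced to all neighbors, otherwise only to customers. A route at $s$ is a customer/peer/provider route according to the relation of its next hop to $s$; its length is its number of hops in the announced AS path. Insecure ASes rank routes by (LP) customer over peer over provider, then (SP) shorter, then (TB) a fixed deterministic tie-break; in the security-second model, each secure AS (member of $S$) additionally prefers secure routes (all ASes on the route in $S$) over insecure ones, applied between LP and SP. Attack: attacker $m\ne d$ (not a neighbor of $d$) announces the bogus path ''$m,d$'' via insecure BGP to all neighbors. Perceivable routes: a simple route $R=(v_{i-1},\dots,v_1,d)$ is perceivable at $v_i$ if either (1) $R$ does not contain $m$ and for every $0<j<i$, $v_j$ announcing $(v_j,\dots,d)$ to $v_{j+1}$ does not violate Ex, or (2) $v_1=m$ and for every $1<j<i$, $v_j$ announcing $(v_j,\dots,d)$ to $v_{j+1}$ does not violate Ex. $\mathrm{PR}(s,m,d)$ is the set of perceivable routes at $s$; $\mathrm{BPR}(s,\emptyset,m,d)$ is the set of routes in $\mathrm{PR}(s,m,d)$ that $s$ prefers over all other perceivable routes according to the ranking before the tie-break step when no AS is secure (i.e., those of best LP type and, among them, shortest length). *)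

From HB Require Import structures.
From mathcomp Require Import all_boot.
Set Implicit Arguments. Unset Strict Implicit. Unset Printing Implicit Defensive.

(** Business relationships. [r u v = Some Cust] means "v is a customer of u",
    [r u v = Some Peer] means "v is a peer of u", [r u v = Some Prov] means
    "v is a provider of u", [r u v = None] means u and v are not adjacent. *)
Inductive relt := Cust | Peer | Prov.

Definition relt_eqb (a b : relt) : bool :=
  match a, b with Cust, Cust | Peer, Peer | Prov, Prov => true | _, _ => false end.
Lemma relt_eqP : Equality.axiom relt_eqb.
Proof. by case; case; constructor. Qed.
HB.instance Definition _ := hasDecEq.Build relt relt_eqP.

Section AS.
Variable V : finType.
Variable r : V -> V -> option relt.

Definition wf_graph : Prop :=
  (forall u, r u u = None) /\
  (forall u v, r u v = Some Cust <-> r v u = Some Prov) /\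
  (forall u v, r u v = Some Peer <-> r v u = Some Peer).

Definition no_cp_cycle : Prop :=
  forall (u : V) (c : seq V),
    path (fun a b => r a b == Some Cust) u c -> last u c = u -> c = [::].

Definition adj (u v : V) : bool := r u v != None.

Definition lpr (o : option relt) : nat :=
  match o with Some Cust => 2 | Some Peer => 1 | _ => 0 end.

Variables (d m : V).

(** A route at [v] is the announced AS path [v_{i-1}; ...; v_1; d]
    (next hop first); its type is the relation of its next hop to [v];
    its length is [size p]. *)
Definition rtype (v : V) (p : seq V) : option relt := r v (head d p).

(** (Ex): [b] announcing a route whose next hop is [a] to [c] is allowed. *)
Definition exOK (a b c : V) : bool :=
  (r b a == Some Cust) || (r b c == Some Cust).

Definition perceivable (s : V) (p : seq V) : bool :=
  let w := rev (s :: p) in (* w = [v_0 = d; v_1; ...; v_i = s] *)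
  let i := size p in
  let exs k := all (fun j => exOK (nth d w j.-1) (nth d w j) (nth d w j.+1))
                   (iota k (i - k)) in
  [&& p != [::], last s p == d, uniq (s :: p),
      path (fun a b => adj a b || ((a == m) && (b == d))) s p &
      ((m \notin p) && exs 1) || ((nth d w 1 == m) && exs 2)].

Definition BPR (s : V) (p : seq V) : Prop :=
  perceivable s p /\
  forall q, perceivable s q ->
    lpr (rtype s q) < lpr (rtype s p) \/
    (lpr (rtype s q) = lpr (rtype s p) /\ size p <= size q).

Variable S : {set V}.
Variable tb : V -> seq V -> nat.   (* deterministic tie-break: lower rank wins *)

(** A route is secure iff all ASes on it are secure and it is not the bogus
    (insecurely announced) path through the attacker. *)
Definition secure (p : seq V) : bool := (m \notin p) && all (fun x => x \in S) p.

Definition better (v : V) (p q : seq V) : bool :=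
  let lp x := lpr (rtype v x) in
  let sc x := (v \in S) && secure x in
  (lp q < lp p) ||
  ((lp p == lp q) &&
   ((sc p && ~~ sc q) ||
    ((sc p == sc q) &&
     ((size p < size q) ||
      ((size p == size q) && (tb v p < tb v q)))))).

(** Routing state: [sel v] is the route (announced path, next hop first)
    selected by [v], for [v] other than [d] and [m]. *)
Variable sel : V -> option (seq V).

Definition ann (n : V) : option (seq V) :=
  if n == d then Some [:: d]
  else if n == m then Some [:: m; d]
  else omap (cons n) (sel n).

Definition exports (n v : V) : bool :=
  if (n == d) || (n == m) then true
  else match sel n with
       | Some (h :: _) => exOK h n v
       | _ => false
       end.

Definition offered (v : V) (p : seq V) : Prop :=
  exists n, [/\ adj v n, ann n = Some p, exports n v & v \notin p].

Definition stable : Prop :=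
  forall v, v != d -> v != m ->
    match sel v with
    | None => forall p, ~ offered v p
    | Some p => offered v p /\ (forall q, offered v q -> q <> p -> better v p q)
    end.

End AS.

(* Only LP types matter, since security is ranked after LP.  Every
   perceivable route [R = h :: R'] at [v] is dominated by the route [v]
   selects, by induction along [R]: the next hop [h] selects a route at least
   as good as [R'], and exports it to [v], because either [v] is a customer of
   [h], or Ex for [R] at [h] makes [R'] a customer route of [h], and then so is
   the route [h] selects.  If [v] is not on that route, [v] is offered a route
   of the same LP type as [R]; if it is, either [R] is a provider route or the
   route of [h] is a customer route, and customer routes propagate along
   selected routes.  Conversely, a selected customer or peer route obeys Ex at
   every hop, so it is perceivable and the BPR route dominates it. *)

From mathcomp Require Import all_boot zify.
Set Implicit Arguments. Unset Strict Implicit. Unset Printing Implicit Defensive.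

Lemma lpr_le2 (o : option relt) : lpr o <= 2.
Proof. by case: o => [[]|]. Qed.

Lemma lpr_ge2 (o : option relt) : 2 <= lpr o -> o = Some Cust.
Proof. by case: o => [[]|]. Qed.

Lemma lpr_gt0_neq_prov (o : option relt) : 0 < lpr o -> o != Some Prov.
Proof. by case: o => [[]|]. Qed.

Lemma lpr_inj_some (o1 o2 : option relt) :
  o1 != None -> o2 != None -> lpr o1 = lpr o2 -> o1 = o2.
Proof. by case: o1 => [[]|]; case: o2 => [[]|]. Qed.

Section Perceivable.
Variables (V : finType) (r : V -> V -> option relt) (d m : V).

Local Notation perc := (perceivable r d m).

Definition exOK_between (w : seq V) (k n : nat) : bool :=
  all (fun j => exOK r (nth d w j.-1) (nth d w j) (nth d w j.+1)) (iota k (n - k)).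

Lemma exOK_between_rcons w v k : 0 < k ->
  exOK_between (rcons w v) k (size w) =
  exOK_between w k (size w).-1 &&
  ((k < size w) ==> exOK r (nth d w (size w).-2) (nth d w (size w).-1) v).
Proof.
move=> k_gt0; rewrite /exOK_between; case: (ltnP k (size w)) => hk /=; last first.
  have -> : size w - k = 0 by lia.
  by have -> : (size w).-1 - k = 0 by lia.
have -> : size w - k = ((size w).-1 - k) + 1 by lia.
rewrite iotaD all_cat /= andbT; congr andb.
  apply: eq_in_all => j; rewrite mem_iota => /andP [_ hj].
  have hj1 : j.+1 < size w by lia.
  have hj2 : j < size w by lia.
  have hj3 : j.-1 < size w by lia.
  by rewrite !nth_rcons hj1 hj2 hj3.
have -> : k + ((size w).-1 - k) = (size w).-1 by lia.
have -> : ((size w).-1).+1 = size w by lia.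
have h1 : (size w).-1 < size w by lia.
have h2 : (size w).-1.-1 < size w by lia.
by rewrite !nth_rcons ltnn eqxx h1 h2.
Qed.

Lemma perceivable_cons v h x q : h != m ->
  perc v (h :: x :: q) =
  [&& adj r v h || (v == m) && (h == d), v \notin h :: x :: q,
      perc h (x :: q) & exOK r x h v].
Proof.
move=> h_neq_m; rewrite /perceivable.
rewrite -[rev (v :: _)]/(rev (v :: h :: x :: q)) rev_cons.
set W := rev (h :: x :: q).
have eW : W = rcons (rcons (rev q) x) h by rewrite /W !rev_cons.
have sW : size W = (size q).+2 by rewrite eW !size_rcons size_rev.
rewrite -/(exOK_between (rcons W v) 1 (size [:: h, x & q]))
        -/(exOK_between (rcons W v) 2 (size [:: h, x & q])).
rewrite -/(exOK_between W 1 (size [:: x & q])) -/(exOK_between W 2 (size [:: x & q])).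
have -> : size [:: h, x & q] = size W by rewrite sW.
have -> : size [:: x & q] = (size W).-1 by rewrite sW.
rewrite !exOK_between_rcons // !nth_rcons sW /=.
have -> : nth d W (size q) = x.
  by rewrite eW nth_rcons size_rcons size_rev ltnSn nth_rcons size_rev ltnn eqxx.
have -> : nth d W (size q).+1 = h by rewrite eW nth_rcons size_rcons size_rev ltnn eqxx.
have W1_m_size : (nth d W 1 == m) -> 0 < size q.
  by rewrite eW; case: (q) => //= /eqP hh; rewrite hh eqxx in h_neq_m.
have -> : (m \notin [:: h, x & q]) = (m \notin x :: q).
  by rewrite in_cons eq_sym (negbTE h_neq_m).
have -> : (2 < (size q).+2) = (0 < size q) by [].
move: W1_m_size; case: (nth d W 1 == m); case: (0 < size q) => //= hW;
  try (by have := hW isT);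
  case: (adj r v h || (v == m) && (h == d)); case: (v \in [:: h, x & q]);
  case: (exOK r x h v); case: (last x q == d); rewrite ?andbF ?andbT //=.
Qed.

Lemma perceivable1 v x : m != d ->
  perc v [:: x] = [&& x == d, v != d & adj r v x || (v == m) && (x == d)].
Proof.
move=> m_neq_d; rewrite /perceivable /=; case: (eqVneq x d) => [->|] //=.
by rewrite !inE m_neq_d !andbT /=; case: (v == d).
Qed.

Lemma perceivable_bogus v : m != d -> v != m -> v != d -> adj r v m -> perc v [:: m; d].
Proof.
move=> m_neq_d v_neq_m v_neq_d vm_adj.
rewrite /perceivable /= !inE !eqxx m_neq_d (negbTE v_neq_m) (negbTE v_neq_d) vm_adj /=.
by rewrite !andbT /= orbT.
Qed.

Lemma perceivable_bogusE v x q : perc v (m :: x :: q) ->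
  [/\ q = [::], x = d & adj r v m || (v == m) && (m == d)].
Proof.
rewrite /perceivable => /and5P [_ hlast huniq hpath hex].
rewrite in_cons eqxx /= in hex.
case: q hlast huniq hpath hex => [|y q] hlast huniq hpath hex.
  by move: hlast hpath => /= /eqP -> /andP [-> _].
exfalso; move: hex => /andP [/eqP hm _].
have hsize : size [:: v, m, x, y & q] - 2 = (size q).+2 by rewrite /=; lia.
rewrite nth_rev // hsize /= in hm.
move: huniq => /= /andP [_ /andP [m_notin _]]; apply/negP: m_notin; rewrite negbK.
by rewrite -hm; apply: mem_nth => /=; lia.
Qed.

Lemma perceivable_neq_d v p : perc v p -> v != d.
Proof.
rewrite /perceivable => /and5P [p_neq0 hlast huniq _ _].
apply: contraTneq huniq => ->; case: p p_neq0 hlast => // x p _ /= /eqP hlast.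
by rewrite -hlast mem_last.
Qed.

Lemma rtype_perceivable v p : v != m -> perc v p -> rtype r d v p != None.
Proof.
move=> v_neq_m; rewrite /perceivable => /and5P [].
case: p => [|h p] //= _ _ _ /andP [/orP [//|/andP [/eqP vm _]] _] _.
by rewrite vm eqxx in v_neq_m.
Qed.

End Perceivable.

Section StableState.
Variables (V : finType) (r : V -> V -> option relt) (d m : V).
Variables (S : {set V}) (tb : V -> seq V -> nat) (sel : V -> option (seq V)).
Hypothesis m_neq_d : m != d.
Hypothesis wf : wf_graph r.
Hypothesis st : stable r d m S tb sel.

Local Notation perc := (perceivable r d m).
Local Notation off := (offered r d m sel).
Local Notation rt := (rtype r d).

Lemma exOK_cust h n v : exOK r h n v -> r v n != Some Prov -> r n h = Some Cust.
Proof.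
case: wf => _ [cust_prov _]; rewrite /exOK => /orP [/eqP //|/eqP /cust_prov ->] //.
Qed.

Lemma selected_route v p : v != d -> v != m -> sel v = Some p ->
  exists n, [/\ adj r v n, v \notin p &
    [\/ n = d /\ p = [:: d], n = m /\ p = [:: m; d] |
       [/\ n != d, n != m & exists h p',
          [/\ sel n = Some (h :: p'), p = n :: h :: p' & exOK r h n v]]]].
Proof.
move=> v_neq_d v_neq_m sel_v; have := st v_neq_d v_neq_m.
rewrite sel_v => -[[n [vn_adj hann hexp v_notin]] _].
exists n; split => //; move: hann hexp; rewrite /ann /exports.
case: (eqVneq n d) => [-> [<-]|n_neq_d]; first by constructor 1.
case: (eqVneq n m) => [-> [<-]|n_neq_m /=]; first by constructor 2.
case sel_n: (sel n) => [[|h p']|] //= [<-] hex.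
by constructor 3; split => //; exists h, p'.
Qed.

Lemma rtype_selected v p : v != d -> v != m -> sel v = Some p -> rt v p != None.
Proof.
move=> v_neq_d v_neq_m sel_v; have [n [vn_adj _ hp]] := selected_route v_neq_d v_neq_m sel_v.
by move: vn_adj; case: hp => [[-> ->]|[-> ->]|[_ _ [h [p' [_ -> _]]]]].
Qed.

Lemma selected_neq_nil v p : v != d -> v != m -> sel v = Some p -> p != [::].
Proof.
move=> v_neq_d v_neq_m sel_v; have [n [_ _ hp]] := selected_route v_neq_d v_neq_m sel_v.
by case: hp => [[_ ->]|[_ ->]|[_ _ [h [p' [_ -> _]]]]].
Qed.

Lemma selected_lpr_max v p q : v != d -> v != m -> sel v = Some p -> off v q ->
  lpr (rt v q) <= lpr (rt v p).
Proof.
move=> v_neq_d v_neq_m sel_v off_q; have := st v_neq_d v_neq_m.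
rewrite sel_v => -[_ best]; case: (eqVneq q p) => [-> //|q_neq_p].
by case/orP: (best q off_q (elimN eqP q_neq_p)) => [/ltnW //|/andP [/eqP -> _]].
Qed.

Lemma offered_selected v q : v != d -> v != m -> off v q ->
  exists p, sel v = Some p /\ lpr (rt v q) <= lpr (rt v p).
Proof.
move=> v_neq_d v_neq_m off_q; case sel_v: (sel v) => [p|].
  by exists p; split => //; apply: selected_lpr_max sel_v off_q.
by have := st v_neq_d v_neq_m; rewrite sel_v => /(_ q off_q).
Qed.

Lemma selected_route_on p v : v != d -> v != m -> sel v = Some p ->
  forall x, x \in p -> x != d -> x != m ->
  exists p', sel x = Some p' /\ (rt v p = Some Cust -> rt x p' = Some Cust).
Proof.
elim: p v => [//|n t IH] v v_neq_d v_neq_m sel_v x.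
have [n' [_ _ hp]] := selected_route v_neq_d v_neq_m sel_v.
case: hp => [[_ [-> ->]]|[_ [-> ->]]|[n_neq_d n_neq_m [h [p' [sel_n [en et] hex]]]]].
- by rewrite inE => /eqP ->; rewrite eqxx.
- by rewrite !inE => /orP [/eqP ->|/eqP ->]; rewrite eqxx // andbF.
subst n' t; have cust_n : rt v (n :: h :: p') = Some Cust -> rt n (h :: p') = Some Cust.
  by rewrite /rtype /= => hc; apply: exOK_cust hex _; rewrite hc.
rewrite in_cons => /orP [/eqP -> _ _|x_on x_neq_d x_neq_m]; first by exists (h :: p').
have [p'' [sel_x hc]] := IH n n_neq_d n_neq_m sel_n x x_on x_neq_d x_neq_m.
by exists p''; split => // /cust_n.
Qed.

Lemma selected_perceivable p v : v != d -> v != m -> sel v = Some p ->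
  0 < lpr (rt v p) -> perc v p.
Proof.
elim: p v => [|n t IH] v v_neq_d v_neq_m sel_v lp_pos.
  by case/negP: (selected_neq_nil v_neq_d v_neq_m sel_v).
have [n' [vn_adj v_notin hp]] := selected_route v_neq_d v_neq_m sel_v.
case: hp => [[en [-> ->]]|[en [-> ->]]|[n_neq_d n_neq_m [h [p' [sel_n [en et] hex]]]]].
- by subst n'; rewrite perceivable1 // eqxx v_neq_d vn_adj.
- by subst n'; apply: perceivable_bogus.
subst n' t; have cust_nh : r n h = Some Cust.
  by apply: exOK_cust hex _; apply: lpr_gt0_neq_prov.
rewrite perceivable_cons // vn_adj v_notin hex /= andbT; apply: IH => //.
by rewrite /rtype /= cust_nh.
Qed.

(* The disjunction says that [h] exports its route to [v]: [v] is a customer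
   of [h], or the route of [h] is a customer route. *)
Lemma selected_from_neighbour v h y q :
  v != d -> v != m -> h != d -> h != m -> adj r v h -> v != h ->
  sel h = Some (y :: q) -> (r v h == Some Prov) || (r h y == Some Cust) ->
  exists p, sel v = Some p /\ lpr (r v h) <= lpr (rt v p).
Proof.
move=> v_neq_d v_neq_m h_neq_d h_neq_m vh_adj v_neq_h sel_h hexp.
case v_on: (v \in y :: q).
  have [p [sel_v cust]] := selected_route_on h_neq_d h_neq_m sel_h v_on v_neq_d v_neq_m.
  exists p; split => //; case/orP: hexp => [/eqP -> //|/eqP cust_hy].
  by rewrite cust ?lpr_le2 // /rtype.
apply: (@offered_selected v (h :: y :: q)) => //; exists h; split => //.
- by rewrite /ann (negbTE h_neq_d) (negbTE h_neq_m) sel_h.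
- rewrite /exports (negbTE h_neq_d) (negbTE h_neq_m) sel_h /exOK.
  case: wf => _ [cust_prov _].
  by case/orP: hexp => [/eqP /cust_prov ->|->]; rewrite ?eqxx ?orbT.
- by rewrite in_cons negb_or v_neq_h v_on.
Qed.

Lemma perceivable_selected_lpr R v : v != d -> v != m -> perc v R ->
  exists p, sel v = Some p /\ lpr (rt v R) <= lpr (rt v p).
Proof.
elim: R v => [//|h [|x q] IH] v v_neq_d v_neq_m.
  rewrite perceivable1 // (negbTE v_neq_m) /= orbF => /and3P [/eqP -> _ vd_adj].
  apply: offered_selected => //; exists d; split => //.
  - by rewrite /ann eqxx.
  - by rewrite /exports eqxx.
  - by rewrite inE.
case: (eqVneq h m) => [->|h_neq_m].
  move/perceivable_bogusE => [-> -> vm_adj]; rewrite (negbTE v_neq_m) /= orbF in vm_adj.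
  apply: offered_selected => //; exists m; split => //.
  - by rewrite /ann (negbTE m_neq_d) eqxx.
  - by rewrite /exports eqxx orbT.
  - by rewrite !inE negb_or v_neq_m v_neq_d.
rewrite perceivable_cons // (negbTE v_neq_m) /= orbF.
move=> /and4P [vh_adj v_notin perc_h hex].
have h_neq_d := perceivable_neq_d perc_h.
have [[|y q0] [sel_h lp_h]] := IH h h_neq_d h_neq_m perc_h.
  by case/negP: (selected_neq_nil h_neq_d h_neq_m sel_h).
have hexp : (r v h == Some Prov) || (r h y == Some Cust).
  case: (eqVneq (r v h) (Some Prov)) => //= not_prov.
  by move: lp_h; rewrite /rtype /= (exOK_cust hex not_prov) /= => /lpr_ge2 ->.
have v_neq_h : v != h by apply: contraNneq v_notin => ->; rewrite mem_head.
exact: selected_from_neighbour sel_h hexp.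
Qed.

End StableState.

(* Gao-Rexford, the non-adjacency of [m] and [d] and the injectivity of the
   tie-break are only needed for a stable state to exist. *)
Theorem mainTheorem7 (V : finType) (r : V -> V -> option relt)
    (d m s : V) (S : {set V}) (tb : V -> seq V -> nat)
    (sel : V -> option (seq V)) :
  wf_graph r -> no_cp_cycle r ->
  m != d -> ~~ adj r m d ->
  s != d -> s != m ->
  (forall v, injective (tb v)) ->
  stable r d m S tb sel ->
  forall R, BPR r d m s R ->
  exists R', sel s = Some R' /\ rtype r d s R' = rtype r d s R.
Proof.
move=> wf _ m_neq_d _ s_neq_d s_neq_m _ st R [perc_R best_R].
have [q [sel_s lp_le]] :=
  perceivable_selected_lpr m_neq_d wf st s_neq_d s_neq_m perc_R.
exists q; split => //; apply: lpr_inj_some.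
- exact (rtype_selected st s_neq_d s_neq_m sel_s).
- exact (rtype_perceivable s_neq_m perc_R).
case: (posnP (lpr (rtype r d s q))) => [lp_q0|lp_q_pos]; first by lia.
have perc_q := selected_perceivable m_neq_d wf st s_neq_d s_neq_m sel_s lp_q_pos.
by case: (best_R q perc_q) => [|[-> //]]; rewrite ltnNge lp_le.
Qed.
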